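(* None of the rules $\mathrm{MCC}$, $\mathrm{MED}$, $\mathrm{FULL}_H$ and $R_{rev}$ satisfies overlapping agenda separability: for each such rule $R$ there exist an agenda $\mathcal{A}$, an independent overlapping decomposition $\{\mathcal{A}_1,\mathcal{A}_2\}$ of $\mathcal{A}$ and a profile $P\in\mathcal{J}_{\mathcal{A}}^n$ such that $J^1\cap\mathcal{A}_2=J^2\cap\mathcal{A}_1$ for all $J^1\in R(P\downarrow\mathcal{A}_1)$, $J^2\in R(P\downarrow\mathcal{A}_2)$, yet $R(P)\neq\{J^1\cup J^2\mid J^1\in R(P\downarrow\mathcal{A}_1),\ J^2\in R(P\downarrow\mathcal{A}_2)\}$.
   Context: Fix a propositional language, a consistent formula $\Gamma$ and $n\ge1$ agents. An issue is a pair $\{\varphi,\neg\varphi\}$ with $\varphi$ neither a tautology nor a contradiction; an agenda $\mathcal{A}$ is a finite set of issues; a sub-agenda is a union of some of its issues. A set $S$ of formulas is consistent if $S\cup\{\Gamma\}$ is satisfiable. $\mathcal{J}_{\mathcal{A}}$ is the set of judgment sets $J\subseteq\mathcal{A}$ that are complete (contain $\varphi$ or $\neg\varphi$ for each issue) and consistent; likewise for sub-agendas. A profile is $P=\langle J_1,\dots,J_n\rangle\in\mathcal{J}_{\mathcal{A}}^n$ and $P\downarrow\mathcal{A}'=\langle J_1\cap\mathcal{A}',\dots,J_n\cap\mathcal{A}'\rangle$. $N(P,\varphi)=|\{i:\varphi\in J_i\}|$; $m(P)=\{\varphi\in\mathcal{A}:N(P,\varphi)>n/2\}$; $P$ is majority-consistent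 if $m(P)$ is consistent. $d_H(J,J')=|J\setminus J'|$; $D_H(\langle J_i\rangle,\langle J'_i\rangle)=\sum_i d_H(J_i,J'_i)$. Sub-agendas $\mathcal{A}_1,\mathcal{A}_2$ with $\mathcal{A}=\mathcal{A}_1\cup\mathcal{A}_2$ form an independent overlapping decomposition if for all $J^1\in\mathcal{J}_{\mathcal{A}_1}$, $J^2\in\mathcal{J}_{\mathcal{A}_2}$ with $J^1\cap\mathcal{A}_2=J^2\cap\mathcal{A}_1$, $J^1\cup J^2\in\mathcal{J}_{\mathcal{A}}$. Rules: $\mathrm{MCC}(P)$ is the set of $J\in\mathcal{J}_{\mathcal{A}}$ with $J\supseteq S$ for some consistent subset $S\subseteq m(P)$ of maximum cardinality. $\mathrm{MED}(P)=\arg\max_{J\in\mathcal{J}_{\mathcal{A}}}\sum_{\varphi\in J}N(P,\varphi)$. $\mathrm{FULL}_H(P)$ is the set of $J\in\mathcal{J}_{\mathcal{A}}$ with $J\supseteq m(Q)$ for some majority-consistent $Q\in\mathcal{J}_{\mathcal{A}}^n$ minimizing $D_H(P,Q)$ among majority-consistent profiles. $R_{rev}(P)=\arg\max_{J\in\mathcal{J}_{\mathcal{A}}}\sum_i\sum_{\varphi\in J}s_{rev}(J_i,\varphi)$ with $s_{rev}(J_i,\varphi)=\min\{d_H(J_i,J')\mid J'\in\mathcal{J}_{\mathcal{A}},\varphi\notin J'\}$. *)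

From Stdlib Require Import ClassicalEpsilon.
From HB Require Import structures.
From mathcomp Require Import all_boot.
Set Implicit Arguments. Unset Strict Implicit. Unset Printing Implicit Defensive.

Inductive form : Type :=
| Var of nat
| Neg of form
| And of form & form
| Or  of form & form
| Imp of form & form.

Fixpoint form_eqb (a b : form) : bool :=
  match a, b with
  | Var i, Var j => i == j
  | Neg a, Neg b => form_eqb a b
  | And a1 a2, And b1 b2 => form_eqb a1 b1 && form_eqb a2 b2
  | Or a1 a2, Or b1 b2 => form_eqb a1 b1 && form_eqb a2 b2
  | Imp a1 a2, Imp b1 b2 => form_eqb a1 b1 && form_eqb a2 b2
  | _, _ => false
  end.

Lemma form_eqb_refl a : form_eqb a a.
Proof. by elim: a => //= [a1 -> a2 ->|a1 -> a2 ->|a1 -> a2 ->]. Qed.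

Lemma form_eqb_eq a b : form_eqb a b -> a = b.
Proof.
elim: a b => [i|a IH|a1 IH1 a2 IH2|a1 IH1 a2 IH2|a1 IH1 a2 IH2]
       [j|b|b1 b2|b1 b2|b1 b2] //=.
- by move/eqP=> ->.
- by move/IH=> ->.
- by case/andP=> /IH1 -> /IH2 ->.
- by case/andP=> /IH1 -> /IH2 ->.
- by case/andP=> /IH1 -> /IH2 ->.
Qed.

Lemma form_eqbP : Equality.axiom form_eqb.
Proof.
move=> a b; apply: (iffP idP) => [/form_eqb_eq //|<-]; exact: form_eqb_refl.
Qed.

HB.instance Definition _ := hasDecEq.Build form form_eqbP.

Fixpoint eval (v : nat -> bool) (f : form) : bool :=
  match f with
  | Var i => v i
  | Neg a => ~~ eval v a
  | And a b => eval v a && eval v b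
  | Or a b => eval v a || eval v b
  | Imp a b => eval v a ==> eval v b
  end.

Definition tautology (f : form) : Prop := forall v, eval v f.
Definition contradiction (f : form) : Prop := forall v, ~~ eval v f.

(* Agendas.  An agenda is given by a list [ag] of formulas phi; each    *)
(* phi represents the issue {phi, ~phi}.  (Issues {phi,~phi} and        *)
(* {psi,~psi} coincide iff phi = psi syntactically.)                   *)
Definition is_agenda (ag : seq form) : Prop :=
  forall phi, phi \in ag -> ~ tautology phi /\ ~ contradiction phi.

Definition agl (ag : seq form) : seq form :=
  undup (flatten [seq [:: phi; Neg phi] | phi <- ag]).

Definition sub_agenda (ag1 ag : seq form) : Prop := {subset ag1 <= ag}.

Definition consistent (G : form) (S : pred form) : Prop :=
  exists v, eval v G /\ forall phi, S phi -> eval v phi.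

Definition is_js (G : form) (ag : seq form) (J : pred form) : Prop :=
  [/\ forall phi, J phi -> phi \in agl ag,
      forall phi, phi \in ag -> J phi || J (Neg phi)
    & consistent G J].

Definition profile (n : nat) := 'I_n -> pred form.

Definition is_profile G ag n (P : profile n) : Prop := forall i, is_js G ag (P i).

Definition restrict n (P : profile n) (ag1 : seq form) : profile n :=
  fun i phi => P i phi && (phi \in agl ag1).

Definition N n (P : profile n) (phi : form) : nat := #|[pred i : 'I_n | P i phi]|.

Definition maj ag n (P : profile n) : pred form :=
  fun phi => (phi \in agl ag) && (n < 2 * N P phi).

Definition maj_consistent G ag n (P : profile n) : Prop := consistent G (maj ag P).

Definition subsetF (S T : pred form) : Prop := forall phi, S phi -> T phi.

Definition dH ag (J J' : pred form) : nat :=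
  count (fun phi => J phi && ~~ J' phi) (agl ag).

Definition DH ag n (P Q : profile n) : nat := \sum_(i < n) dH ag (P i) (Q i).

(* Aggregation rules: [R G ag n P J] means J \in R(P).                  *)
Definition rule := form -> seq form -> forall n, profile n -> pred form -> Prop.

Definition card_in ag (S : pred form) : nat := count S (agl ag).

Definition MCC : rule := fun G ag n P J =>
  is_js G ag J /\
  exists S : pred form,
    [/\ subsetF S (maj ag P), consistent G S,
        (forall S' : pred form, subsetF S' (maj ag P) -> consistent G S' ->
            card_in ag S' <= card_in ag S)
      & subsetF S J].

Definition med_score ag n (P : profile n) (J : pred form) : nat :=
  \sum_(phi <- agl ag | J phi) N P phi.

Definition MED : rule := fun G ag n P J =>
  is_js G ag J /\
  forall J', is_js G ag J' -> med_score ag P J' <= med_score ag P J.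

Definition FULL_H : rule := fun G ag n P J =>
  is_js G ag J /\
  exists Q : profile n,
    [/\ is_profile G ag Q, maj_consistent G ag Q,
        (forall Q' : profile n, is_profile G ag Q' -> maj_consistent G ag Q' ->
            DH ag P Q <= DH ag P Q')
      & subsetF (maj ag Q) J].

(* s_rev(Ji, phi) = min { dH(Ji, J') | J' judgment set, phi \notin J' }.
   Chosen by (classical) description; when the set is empty the value is
   unspecified, which does not affect R_rev. *)
Definition srev_cand G ag (Ji : pred form) (phi : form) (k : nat) : Prop :=
  exists J', [/\ is_js G ag J', ~~ J' phi & dH ag Ji J' = k].

Definition srev G ag (Ji : pred form) (phi : form) : nat :=
  epsilon (inhabits 0%N)
    (fun k => srev_cand G ag Ji phi k /\
              forall k', srev_cand G ag Ji phi k' -> k <= k').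

Definition rev_score G ag n (P : profile n) (J : pred form) : nat :=
  \sum_(i < n) \sum_(phi <- agl ag | J phi) srev G ag (P i) phi.

Definition R_rev : rule := fun G ag n P J =>
  is_js G ag J /\
  forall J', is_js G ag J' -> rev_score G ag P J' <= rev_score G ag P J.

Definition agrees (ag1 ag2 : seq form) (J1 J2 : pred form) : Prop :=
  forall phi, (J1 phi && (phi \in agl ag2)) = (J2 phi && (phi \in agl ag1)).

Definition indep_overlap_decomp G (ag ag1 ag2 : seq form) : Prop :=
  [/\ sub_agenda ag1 ag, sub_agenda ag2 ag,
      agl ag =i [predU agl ag1 & agl ag2]
    & forall J1 J2, is_js G ag1 J1 -> is_js G ag2 J2 -> agrees ag1 ag2 J1 J2 ->
        is_js G ag [pred phi | J1 phi || J2 phi]].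

Definition violates_OAS (R : rule) : Prop :=
  exists (G : form) (n : nat) (ag ag1 ag2 : seq form) (P : profile n),
    [/\ 0 < n, consistent G pred0, is_agenda ag,
        indep_overlap_decomp G ag ag1 ag2 & is_profile G ag P] /\
        (forall J1 J2, R G ag1 n (restrict P ag1) J1 ->
                       R G ag2 n (restrict P ag2) J2 -> agrees ag1 ag2 J1 J2) /\
        ~ (forall J : pred form,
             R G ag n P J <->
             exists J1 J2, [/\ R G ag1 n (restrict P ag1) J1,
                               R G ag2 n (restrict P ag2) J2
                             & J =1 [pred phi | J1 phi || J2 phi]]).

From HB Require Import structures.
From Stdlib Require Import ClassicalEpsilon.
From mathcomp Require Import all_boot.
Set Implicit Arguments. Unset Strict Implicit. Unset Printing Implicit Defensive.

(* The counterexample has six issues x1 x2 y1 y2 z1 z2 and the constraint that neither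
   {y1, y2} nor {z1, z2} is accepted together with x1 or with x2.  The sub-agendas
   {x, y} and {x, z} overlap in the x's and are independent, because the constraint
   splits into a condition on (x, y) and one on (x, z).  In the profile
   (x1 x2 y1 ~y2 z1 ~z2), (x1 x2 ~y1 y2 ~z1 z2), (~x1 ~x2 y1 y2 z1 z2) the majority
   accepts everything.  On a sub-agenda the cheapest repair gives up one y (or z) and
   keeps both x's, whereas on the whole agenda giving up both x's is no more expensive
   than giving up a y and a z; so the rule selects a judgment rejecting x2 on the whole
   agenda, while every combination of the sub-agenda outcomes accepts x2.  For R_rev a
   four-voter profile does the same with the overlap judgment ~x1, x2.
   All outcomes are obtained by evaluation: judgment sets are represented by valuations
   of the six variables, each rule is characterised by a computable set of valuations,
   and for FULL_H the competing profiles are enumerated within a Hamming ball. *)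

Fixpoint choices (T : eqType) (ls : seq (seq T)) : seq (seq T) :=
  if ls is l :: ls' then [seq x :: q | x <- l, q <- choices ls'] else [:: [::]].

Lemma mem_choices (T : eqType) (x0 : T) ls qs :
  qs \in choices ls <->
  size qs = size ls /\ forall i, i < size ls -> nth x0 qs i \in nth [::] ls i.
Proof.
elim: ls qs => [|l ls IH] qs /=.
  by rewrite inE; split=> [/eqP -> //|[/size0nil ->]].
split=> [/allpairsP[[x q] [/= Hx /IH[Hs Hq] ->]]|].
  split=> [|[|i] Hi] /=; first by rewrite Hs.
  - exact: Hx.
  - exact: Hq.
case: qs => [[//]|x q [[Hs] Hq]]; apply/allpairsP; exists (x, q); split=> //.
  exact: (Hq 0).
by apply/IH; split=> // i Hi; exact: (Hq i.+1).
Qed.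

Definition words k : seq (seq bool) := choices (nseq k [:: true; false]).

Lemma mem_words k w : size w = k -> w \in words k.
Proof.
move=> Hw; apply/(mem_choices false); rewrite size_nseq; split=> // i Hi.
by rewrite nth_nseq Hi; case: (nth _ _ _).
Qed.

Definition max_seq (s : seq nat) : nat := foldr maxn 0 s.

Definition argmax (T : eqType) (f : T -> nat) (s : seq T) : seq T :=
  [seq x <- s | f x == max_seq (map f s)].

Lemma argmaxP (T : eqType) (f : T -> nat) s x :
  x \in s -> reflect (forall y, y \in s -> f y <= f x) (x \in argmax f s).
Proof.
have maxE : max_seq (map f s) = \max_(y <- s) f y by rewrite /max_seq foldrE big_map.
move=> Hx; rewrite mem_filter Hx andbT maxE; apply: (iffP eqP) => [-> y Hy|Hmax].
  exact: leq_bigmax_seq.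
apply/eqP; rewrite eqn_leq (leq_bigmax_seq x) //=.
by apply/bigmax_leqP_seq => y Hy _; exact: Hmax.
Qed.

Definition min_seq (s : seq nat) : nat := foldr minn (head 0 s) s.

Lemma min_seq_le s x : x \in s -> min_seq s <= x.
Proof.
rewrite /min_seq; move: (head 0 s) => m; elim: s => //= y s IH.
by rewrite inE => /predU1P[->|/IH]; [exact: geq_minl | exact/leq_trans/geq_minr].
Qed.

Lemma min_seq_mem s : s != [::] -> min_seq s \in s.
Proof.
have foldr_mem m t : foldr minn m t \in m :: t.
  elim: t => [|y t IH]; first exact: mem_head.
  rewrite [foldr _ _ _]/= !inE; case: (leqP y (foldr minn m t)) => _.
    by rewrite eqxx orbT.
  by move: IH; rewrite inE => /orP[->|->]; rewrite ?orbT.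
case: s => // y s _; rewrite /min_seq [head _ _]/=.
by case/predU1P: (foldr_mem y (y :: s)) => [->|//]; exact: mem_head.
Qed.

(** * Judgment sets as valuations *)

Fixpoint vars_lt k (f : form) : bool :=
  match f with
  | Var i => i < k
  | Neg a => vars_lt k a
  | And a b | Or a b | Imp a b => vars_lt k a && vars_lt k b
  end.

Definition val_of (w : seq bool) : nat -> bool := nth false w.

Definition word_of k (v : nat -> bool) : seq bool := [seq v i | i <- iota 0 k].

Lemma eval_word_of k v f : vars_lt k f -> eval (val_of (word_of k v)) f = eval v f.
Proof.
elim: f => [i|a IH|a IHa b IHb|a IHa b IHb|a IHa b IHb] /=.
- by move=> lt_ik; rewrite /val_of (nth_map 0) ?size_iota // nth_iota.
- by move/IH->.
all: by case/andP=> /IHa-> /IHb->.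
Qed.

Lemma consistent_eq G (S S' : pred form) : S =1 S' -> consistent G S -> consistent G S'.
Proof. by move=> eqS [v [Gv Sv]]; exists v; split=> // phi; rewrite -eqS; exact: Sv. Qed.

Lemma mem_agl ag phi : phi \in ag -> (phi \in agl ag) && (Neg phi \in agl ag).
Proof.
move=> ag_phi; rewrite !mem_undup; apply/andP.
by split; apply/flatten_mapP; exists phi; rewrite // !inE eqxx ?orbT.
Qed.

Lemma aglP ag phi :
  phi \in agl ag -> phi \in ag \/ exists2 psi, psi \in ag & phi = Neg psi.
Proof.
rewrite mem_undup => /flatten_mapP[psi ag_psi].
by rewrite !inE => /predU1P[->|/eqP->]; [left | right; exists psi].
Qed.

Lemma vars_lt_agl k ag : all (vars_lt k) ag -> all (vars_lt k) (agl ag).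
Proof.
move=> /allP Hag; apply/allP=> phi /aglP[/Hag //|[psi /Hag Hpsi ->]]; exact: Hpsi.
Qed.

Definition js_of (L : seq form) (w : seq bool) : pred form :=
  fun phi => (phi \in L) && eval (val_of w) phi.

Lemma is_js_eq G ag (J J' : pred form) : J =1 J' -> is_js G ag J -> is_js G ag J'.
Proof.
move=> eqJ [HL Hc Hcons]; split; last exact: consistent_eq Hcons.
  by move=> phi; rewrite -eqJ; exact: HL.
by move=> phi; rewrite -!eqJ; exact: Hc.
Qed.

Section Models.

Variables (G : form) (k : nat).
Hypothesis G_vars : vars_lt k G.

Definition models : seq (seq bool) := [seq w <- words k | eval (val_of w) G].

Lemma word_of_model v : eval v G -> word_of k v \in models.
Proof.
move=> Gv; rewrite mem_filter eval_word_of // Gv mem_words //.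
by rewrite size_map size_iota.
Qed.

Definition consistentb (L : seq form) (S : pred form) : bool :=
  has (fun w => all (fun phi => S phi ==> eval (val_of w) phi) L) models.

Lemma consistentP L (S : pred form) :
  all (vars_lt k) L -> (forall phi, S phi -> phi \in L) ->
  consistent G S <-> consistentb L S.
Proof.
move=> /allP L_vars SL; split=> [[v [Gv Sv]]|/hasP[w]].
  apply/hasP; exists (word_of k v); first exact: word_of_model.
  apply/allP=> phi /L_vars phi_vars; apply/implyP=> /Sv.
  by rewrite eval_word_of.
rewrite mem_filter => /andP[Gw _] /allP Hw; exists (val_of w); split=> // phi Sphi.
by move/implyP: (Hw _ (SL _ Sphi)); apply.
Qed.

Variable ag : seq form.
Hypothesis ag_vars : all (vars_lt k) ag.

Lemma js_of_is_js w : w \in models -> is_js G ag (js_of (agl ag) w).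
Proof.
rewrite mem_filter => /andP[Gw _]; split.
- by move=> phi /andP[].
- move=> phi /mem_agl/andP[ag_phi ag_nphi].
  by rewrite /js_of ag_phi ag_nphi /=; case: (eval _ phi).
- by exists (val_of w); split=> // phi /andP[].
Qed.

Lemma is_jsP J :
  is_js G ag J <-> exists2 w, w \in models & J =1 js_of (agl ag) w.
Proof.
split=> [[JL Jc [v [Gv Jv]]]|[w Hw eqJ]]; last first.
  by apply: is_js_eq (js_of_is_js Hw) => phi; rewrite eqJ.
exists (word_of k v); first exact: word_of_model.
move=> phi; rewrite /js_of; case agl_phi: (phi \in agl ag); last first.
  by apply/negbTE/negP=> /JL; rewrite agl_phi.
rewrite eval_word_of /=; last exact: (allP (vars_lt_agl ag_vars)).
have [ag_phi|[psi ag_psi ->]] := aglP agl_phi.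
  case Jphi: (J phi); first by rewrite Jv.
  by move: (Jc _ ag_phi); rewrite Jphi => /Jv /= /negbTE.
case Jnpsi: (J (Neg psi)); first by rewrite (Jv _ Jnpsi).
by move: (Jc _ ag_psi); rewrite Jnpsi orbF /= => /Jv ->.
Qed.

Lemma argmax_rule (sc : pred form -> nat) (scw : seq bool -> nat) J :
  (forall J w, J =1 js_of (agl ag) w -> sc J = scw w) ->
  (is_js G ag J /\ forall J', is_js G ag J' -> sc J' <= sc J) <->
  exists2 w, w \in argmax scw models & J =1 js_of (agl ag) w.
Proof.
move=> sc_scw; split=> [[/is_jsP[w Hw eqJ] Jmax]|[w w_max eqJ]].
  exists w => //; apply/argmaxP => // v Hv.
  rewrite -(sc_scw _ _ eqJ) -(sc_scw _ v (frefl _)); exact/Jmax/js_of_is_js.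
have Hw : w \in models by move: w_max; rewrite mem_filter => /andP[].
move/(argmaxP _ Hw): w_max => w_max; split.
  by apply: is_js_eq (js_of_is_js Hw) => phi; rewrite eqJ.
by move=> J' /is_jsP[v Hv eqJ']; rewrite (sc_scw _ _ eqJ') (sc_scw _ _ eqJ); exact: w_max.
Qed.

End Models.

(** * Computable characterisations of the rules *)

Definition prof_of n (F : nat -> pred form) : profile n := fun i => F i.
Arguments prof_of : clear implicits.

Definition restrict_family (F : nat -> pred form) (L : seq form) : nat -> pred form :=
  fun i phi => F i phi && (phi \in L).

Lemma restrict_prof_of n F ag1 L1 :
  agl ag1 = L1 -> restrict (prof_of n F) ag1 = prof_of n (restrict_family F L1).
Proof. by move=> <-. Qed.

Lemma N_prof_of n F phi : N (prof_of n F) phi = count (fun i => F i phi) (iota 0 n).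
Proof.
rewrite /N cardE /enum_mem size_filter -val_enum_ord count_map.
by rewrite enumT; apply: eq_count.
Qed.

Lemma sum_ord_iota n (f : nat -> nat) : \sum_(i < n) f i = sumn [seq f i | i <- iota 0 n].
Proof. by rewrite -(big_mkord xpredT f) sumnE big_map /index_iota subn0. Qed.

Lemma big_seq_sumn (s : seq form) (p : pred form) (f : form -> nat) :
  \sum_(x <- s | p x) f x = sumn [seq f x | x <- s & p x].
Proof. by rewrite sumnE big_map big_filter. Qed.

Definition majority (L : seq form) n (F : nat -> pred form) : pred form :=
  fun phi => (phi \in L) && (n < 2 * count (fun i => F i phi) (iota 0 n)).

Lemma maj_prof_of ag n F : maj ag (prof_of n F) =1 majority (agl ag) n F.
Proof. by move=> phi; rewrite /maj N_prof_of. Qed.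

Lemma maj_eq ag n (P Q : profile n) : (forall i, P i =1 Q i) -> maj ag P =1 maj ag Q.
Proof. by move=> eqPQ phi; rewrite /maj /N (eq_card (fun i => eqPQ i phi)). Qed.

Lemma DH_eq ag n (P Q Q' : profile n) : (forall i, Q i =1 Q' i) -> DH ag P Q = DH ag P Q'.
Proof. by move=> eqQ; apply: eq_bigr => i _; apply: eq_count => phi; rewrite eqQ. Qed.

Lemma DH_prof_of ag n F F' :
  DH ag (prof_of n F) (prof_of n F') = sumn [seq dH ag (F i) (F' i) | i <- iota 0 n].
Proof. exact: (sum_ord_iota n (fun i => dH ag (F i) (F' i))). Qed.

(* [dH ag] with the list [agl ag] passed explicitly, so that it is evaluated once. *)
Definition hamming (L : seq form) (J J' : pred form) : nat :=
  count (fun phi => J phi && ~~ J' phi) L.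

Definition srev_min (L : seq form) (V : seq (seq bool)) (Ji : pred form) (phi : form) : nat :=
  min_seq [seq hamming L Ji (js_of L v) | v <- V & ~~ js_of L v phi].

Section Rules.

Variables (G : form) (k : nat) (ag : seq form) (n : nat) (F : nat -> pred form).
Hypotheses (G_vars : vars_lt k G) (ag_vars : all (vars_lt k) ag).

Let agl_vars : all (vars_lt k) (agl ag) := vars_lt_agl ag_vars.

Definition med_outputs : seq (seq bool) :=
  argmax (fun w => sumn [seq count (fun i => F i phi) (iota 0 n)
                          | phi <- agl ag & js_of (agl ag) w phi]) (models G k).

Lemma MED_prof_of J :
  MED G ag (prof_of n F) J <-> exists2 w, w \in med_outputs & J =1 js_of (agl ag) w.
Proof.
apply: argmax_rule => // J' w eqJ; rewrite /med_score big_seq_sumn (eq_filter eqJ).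
by congr sumn; apply: eq_map => phi; exact: N_prof_of.
Qed.

Lemma srev_minE Ji phi :
  has (fun v => ~~ js_of (agl ag) v phi) (models G k) ->
  srev G ag Ji phi = srev_min (agl ag) (models G k) Ji phi.
Proof.
move=> rejectable; set m := srev_min _ _ Ji phi.
have cand_m : srev_cand G ag Ji phi m.
  have /mapP[v] : m \in [seq hamming (agl ag) Ji (js_of (agl ag) v)
                          | v <- models G k & ~~ js_of (agl ag) v phi].
    by apply: min_seq_mem; rewrite -size_eq0 size_map size_filter -lt0n -has_count.
  rewrite mem_filter => /andP[v_rej v_model] ->.
  by exists (js_of (agl ag) v); split=> //; exact: js_of_is_js v_model.
have min_m k' : srev_cand G ag Ji phi k' -> m <= k'.
  case=> J' [/(is_jsP G_vars ag_vars)[v v_model eqJ'] J'_rej <-].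
  have -> : dH ag Ji J' = hamming (agl ag) Ji (js_of (agl ag) v).
    by apply: eq_count => psi; rewrite eqJ'.
  by apply/min_seq_le/mapP; exists v; rewrite // mem_filter v_model andbT -eqJ'.
have [cand_s min_s] := epsilon_spec (inhabits 0)
  (fun x => srev_cand G ag Ji phi x /\ forall k', srev_cand G ag Ji phi k' -> x <= k')
  (ex_intro _ m (conj cand_m min_m)).
by apply/eqP; rewrite /srev eqn_leq min_s // min_m.
Qed.

(* The weight of each formula is computed once, before maximising over models. *)
Definition rev_outputs : seq (seq bool) :=
  let L := agl ag in let V := models G k in
  let weights := [seq (phi, sumn [seq srev_min L V (F i) phi | i <- iota 0 n]) | phi <- L] in
  argmax (fun w => sumn [seq x.2 | x <- weights & js_of L w x.1]) V.

Lemma R_rev_prof_of J :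
  all (fun phi => has (fun v => ~~ js_of (agl ag) v phi) (models G k)) (agl ag) ->
  R_rev G ag (prof_of n F) J <-> exists2 w, w \in rev_outputs & J =1 js_of (agl ag) w.
Proof.
move=> /allP rejectable; apply: argmax_rule => // J' w eqJ.
rewrite /rev_score exchange_big /= big_seq_sumn filter_map -map_comp (eq_filter eqJ).
congr sumn; apply/eq_in_map => phi; rewrite mem_filter => /andP[_ agl_phi] /=.
rewrite (sum_ord_iota n (fun i => srev G ag (F i) phi)); congr sumn; apply: eq_map => i.
exact/srev_minE/rejectable.
Qed.

Definition maj_list : seq form := [seq phi <- agl ag | majority (agl ag) n F phi].

Definition mcc_candidates : seq (seq form) :=
  [seq s <- [seq mask m maj_list | m <- words (size maj_list)] | consistentb G k (agl ag) (mem s)].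

Lemma mcc_candidateP s :
  s \in mcc_candidates -> subsetF (mem s) (maj ag (prof_of n F)) /\ consistent G (mem s).
Proof.
rewrite mem_filter => /andP[s_cons /mapP[m _ eq_s]]; subst s.
have s_maj : subsetF (mem (mask m maj_list)) (maj ag (prof_of n F)).
  by move=> phi /mem_mask; rewrite mem_filter maj_prof_of => /andP[].
have s_agl : forall phi, phi \in mask m maj_list -> phi \in agl ag.
  by move=> phi /s_maj; rewrite maj_prof_of => /andP[].
by split=> //; apply: (proj2 (consistentP (S := mem (mask m maj_list)) G_vars agl_vars s_agl)).
Qed.

Lemma mcc_candidate_of (S : pred form) :
  subsetF S (maj ag (prof_of n F)) -> consistent G S ->
  [seq phi <- agl ag | S phi] \in mcc_candidates /\ S =1 mem [seq phi <- agl ag | S phi].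
Proof.
move=> S_maj S_cons.
have S_agl phi : S phi -> phi \in agl ag by move/S_maj; rewrite maj_prof_of => /andP[].
have eqS : S =1 mem [seq phi <- agl ag | S phi].
  by move=> phi; rewrite /= mem_filter; case Sphi: (S phi); rewrite // S_agl.
split=> //; rewrite mem_filter; apply/andP; split.
  have s_agl : forall phi, phi \in [seq phi <- agl ag | S phi] -> phi \in agl ag.
    by move=> phi; rewrite mem_filter => /andP[].
  apply: (proj1 (consistentP (S := mem [seq phi <- agl ag | S phi]) G_vars agl_vars s_agl)).
  exact: consistent_eq S_cons.
have -> : [seq phi <- agl ag | S phi] = [seq phi <- maj_list | S phi].
  rewrite -filter_predI; apply: eq_filter => phi /=.
  by case Sphi: (S phi) => //=; rewrite -maj_prof_of S_maj.
by rewrite filter_mask; apply/map_f/mem_words; rewrite size_map.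
Qed.

Definition mcc_outputs : seq (seq bool) :=
  [seq w <- models G k | has (fun s => all (js_of (agl ag) w) s)
                           (argmax (fun s : seq form => count (mem s) (agl ag)) mcc_candidates)].

Lemma MCC_prof_of J :
  MCC G ag (prof_of n F) J <-> exists2 w, w \in mcc_outputs & J =1 js_of (agl ag) w.
Proof.
split=> [[/(is_jsP G_vars ag_vars)[w w_model eqJ] [S [S_maj S_cons S_max S_J]]]|].
  have [S_cand eqS] := mcc_candidate_of S_maj S_cons.
  exists w => //; rewrite mem_filter w_model andbT; apply/hasP.
  exists [seq phi <- agl ag | S phi].
    apply/argmaxP => // s /mcc_candidateP[s_maj s_cons].
    by rewrite -(eq_count eqS); exact: S_max.
  by apply/allP => phi; rewrite mem_filter -eqJ => /andP[/S_J].
case=> w w_out eqJ; move: w_out; rewrite mem_filter => /andP[has_s w_model].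
case/hasP: has_s => s s_max s_J.
have s_cand : s \in mcc_candidates by move: s_max; rewrite mem_filter => /andP[].
have [s_maj s_cons] := mcc_candidateP s_cand.
split; first by apply: is_js_eq (js_of_is_js ag w_model) => phi; rewrite eqJ.
exists (mem s); split=> //.
  move=> S' S'_maj S'_cons; have [S'_cand eqS'] := mcc_candidate_of S'_maj S'_cons.
  by rewrite /card_in (eq_count eqS'); exact: (argmaxP _ s_cand s_max).
by move=> phi phi_s; rewrite eqJ; exact: (allP s_J).
Qed.

Definition js_lists : seq (seq form) :=
  undup [seq [seq phi <- agl ag | js_of (agl ag) w phi] | w <- models G k].

Definition list_family (qs : seq (seq form)) : nat -> pred form :=
  fun i phi => phi \in nth [::] qs i.

Definition dist (qs : seq (seq form)) : nat :=
  sumn [seq dH ag (F i) (list_family qs i) | i <- iota 0 n].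

Definition ball (d : nat) : seq (seq (seq form)) :=
  choices [seq [seq s <- js_lists | dH ag (F i) (mem s) <= d] | i <- iota 0 n].

Definition maj_consistentb (qs : seq (seq form)) : bool :=
  consistentb G k (agl ag) (majority (agl ag) n (list_family qs)).

Lemma maj_consistentP (Q : profile n) qs :
  maj ag Q =1 majority (agl ag) n (list_family qs) ->
  maj_consistent G ag Q <-> maj_consistentb qs.
Proof.
move=> majQ; rewrite /maj_consistent -(consistentP G_vars agl_vars) => [|phi /andP[] //].
by split; apply: consistent_eq => phi; rewrite majQ.
Qed.

Lemma ball_profile d qs : qs \in ball d -> is_profile G ag (prof_of n (list_family qs)).
Proof.
case/(mem_choices [::]) => _; rewrite size_map size_iota => qs_ball i.
rewrite /prof_of /list_family; have := qs_ball i (ltn_ord i).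
rewrite (nth_map 0) ?size_iota // nth_iota // add0n mem_filter mem_undup.
case/andP=> _ /mapP[w w_model ->]; apply: is_js_eq (js_of_is_js ag w_model) => phi.
by rewrite mem_filter /js_of; case: (phi \in agl ag); rewrite ?andbT.
Qed.

Lemma profile_in_ball (Q : profile n) d :
  is_profile G ag Q -> DH ag (prof_of n F) Q <= d ->
  exists2 qs, qs \in ball d &
    dist qs = DH ag (prof_of n F) Q /\ maj ag Q =1 majority (agl ag) n (list_family qs).
Proof.
move=> Q_prof Q_near.
have Q_agl i phi : Q i phi -> phi \in agl ag by case: (Q_prof i) => QL _ _; exact: QL.
pose qs := [seq [seq phi <- agl ag | Q i phi] | i <- enum 'I_n].
have qsE (i : 'I_n) : nth [::] qs i = [seq phi <- agl ag | Q i phi].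
  by rewrite (nth_map i) ?size_enum_ord // nth_ord_enum.
have eqQ i : Q i =1 list_family qs i.
  move=> phi; rewrite /list_family qsE mem_filter.
  by case Qphi: (Q i phi); rewrite // (Q_agl _ _ Qphi).
exists qs; last first.
  split=> [|phi]; last by rewrite -maj_prof_of; apply: maj_eq => i; exact: eqQ.
  by rewrite /dist -DH_prof_of; apply: DH_eq => i phi; rewrite eqQ.
rewrite /ball; apply/(mem_choices [::]); split=> [|i].
  by rewrite /qs !size_map size_iota -enumT size_enum_ord.
rewrite size_map size_iota => lt_in; have -> : i = Ordinal lt_in by [].
rewrite qsE (nth_map 0) ?size_iota // nth_iota // add0n mem_filter; apply/andP; split.
  apply: leq_trans Q_near; rewrite /DH (bigD1 (Ordinal lt_in)) //= -/(dH _ _ _).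
  apply: leq_trans (leq_addr _ _); rewrite leq_eqVlt; apply/orP; left; apply/eqP.
  by apply: eq_in_count => phi agl_phi; rewrite /= mem_filter agl_phi andbT.
have [w w_model eqQw] := (is_jsP G_vars ag_vars (Q (Ordinal lt_in))).1 (Q_prof _).
by rewrite mem_undup; apply/mapP; exists w => //; apply: eq_filter.
Qed.

Lemma FULL_H_of_ball qs0 J :
  qs0 \in ball (dist qs0) -> maj_consistentb qs0 -> is_js G ag J ->
  all (fun phi => majority (agl ag) n (list_family qs0) phi ==> J phi) (agl ag) ->
  all (fun qs => (dist qs < dist qs0) ==> ~~ maj_consistentb qs) (ball (dist qs0).-1) ->
  FULL_H G ag (prof_of n F) J.
Proof.
move=> qs0_ball qs0_cons J_js /allP maj_J /allP closer_incons; split=> //.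
exists (prof_of n (list_family qs0)); split.
- exact: ball_profile qs0_ball.
- exact/(maj_consistentP (maj_prof_of _ _ _)).
- move=> Q Q_prof Q_cons; rewrite DH_prof_of -/(dist qs0) leqNgt; apply/negP=> Q_closer.
  have [|qs qs_ball [dist_qs maj_qs]] := profile_in_ball (d := (dist qs0).-1) Q_prof.
    by rewrite -ltnS (ltn_predK Q_closer).
  have := closer_incons _ qs_ball; rewrite dist_qs Q_closer /=.
  by move/negP; apply; apply/(maj_consistentP maj_qs).
- move=> phi; rewrite maj_prof_of => maj_phi.
  have /andP[agl_phi _] := maj_phi; exact: (implyP (maj_J _ agl_phi)).
Qed.

Lemma FULL_H_extends qs0 (Lk : seq form) (wk : seq bool) :
  qs0 \in ball (dist qs0) -> maj_consistentb qs0 ->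
  all (fun qs => (dist qs <= dist qs0) && maj_consistentb qs ==>
                 all (fun phi => js_of Lk wk phi ==> majority (agl ag) n (list_family qs) phi) Lk)
      (ball (dist qs0)) ->
  forall J, FULL_H G ag (prof_of n F) J -> subsetF (js_of Lk wk) J.
Proof.
move=> qs0_ball qs0_cons /allP near_maj J [_ [Q [Q_prof Q_cons Q_min Q_J]]] phi K_phi.
have Q_near : DH ag (prof_of n F) Q <= dist qs0.
  rewrite /dist -DH_prof_of; apply: Q_min; first exact: ball_profile qs0_ball.
  exact/(maj_consistentP (maj_prof_of _ _ _)).
have [qs qs_ball [dist_qs maj_qs]] := profile_in_ball Q_prof Q_near.
have /andP[Lk_phi _] := K_phi.
move: (near_maj _ qs_ball); rewrite dist_qs Q_near.
rewrite (proj1 (maj_consistentP maj_qs) Q_cons) /= => /allP/(_ _ Lk_phi).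
by rewrite K_phi -maj_qs => /Q_J.
Qed.

End Rules.

(** * Witnessing a violation of separability *)

Definition agrees_on (L L1 L2 : seq form) (w1 w2 : seq bool) : bool :=
  all (fun phi => (js_of L1 w1 phi && (phi \in L2)) == (js_of L2 w2 phi && (phi \in L1))) L.

Lemma indep_overlap_decomp_glue G k ag ag1 ag2 (glue : seq bool -> seq bool -> seq bool) :
  vars_lt k G -> all (vars_lt k) ag1 -> all (vars_lt k) ag2 ->
  sub_agenda ag1 ag -> sub_agenda ag2 ag -> agl ag =i agl ag1 ++ agl ag2 ->
  all (fun w1 => all (fun w2 => agrees_on (agl ag) (agl ag1) (agl ag2) w1 w2 ==>
         (glue w1 w2 \in models G k) &&
         all (fun phi => (js_of (agl ag1) w1 phi || js_of (agl ag2) w2 phi) ==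
                         js_of (agl ag) (glue w1 w2) phi) (agl ag))
       (models G k)) (models G k) ->
  indep_overlap_decomp G ag ag1 ag2.
Proof.
move=> G_vars ag1_vars ag2_vars sub1 sub2 cover /allP glue_ok.
split=> // [phi|J1 J2]; first by rewrite cover mem_cat.
move=> /(is_jsP G_vars ag1_vars)[w1 w1_model eqJ1].
move=> /(is_jsP G_vars ag2_vars)[w2 w2_model eqJ2] J12.
have agree : agrees_on (agl ag) (agl ag1) (agl ag2) w1 w2.
  by apply/allP=> phi _; apply/eqP; rewrite -eqJ1 -eqJ2; exact: J12.
have /andP[glue_model /allP glue_js] := implyP (allP (glue_ok _ w1_model) _ w2_model) agree.
apply: is_js_eq (js_of_is_js ag glue_model) => phi /=; rewrite eqJ1 eqJ2.
case agl_phi: (phi \in agl ag); first by rewrite (eqP (glue_js _ agl_phi)).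
rewrite /js_of agl_phi; move: agl_phi; rewrite cover mem_cat.
by case/norP=> /negbTE-> /negbTE->.
Qed.

Definition js_valued (R : rule) : Prop :=
  forall G ag n (P : profile n) J, R G ag n P J -> is_js G ag J.

Lemma MCC_js_valued : js_valued MCC. Proof. by move=> G ag n P J []. Qed.
Lemma MED_js_valued : js_valued MED. Proof. by move=> G ag n P J []. Qed.
Lemma FULL_H_js_valued : js_valued FULL_H. Proof. by move=> G ag n P J []. Qed.
Lemma R_rev_js_valued : js_valued R_rev. Proof. by move=> G ag n P J []. Qed.

Lemma js_extends_on G ov (K J : pred form) :
  is_js G ov K -> consistent G J -> subsetF K J -> {in agl ov, J =1 K}.
Proof.
case=> _ K_compl _ [v [_ Jv]] KJ.
have J_excl psi : J psi -> J (Neg psi) = false.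
  by move/Jv=> psi_v; apply/negbTE/negP=> /Jv /=; rewrite psi_v.
have J_excl' psi : J (Neg psi) -> J psi = false.
  by move/Jv=> /= /negbTE psi_v; apply/negbTE/negP=> /Jv; rewrite psi_v.
move=> phi /aglP[ov_phi|[psi ov_psi ->]]; case Kphi: (K _); try exact: KJ.
  by move: (K_compl _ ov_phi); rewrite Kphi => /KJ/J_excl'.
by move: (K_compl _ ov_psi); rewrite Kphi orbF => /KJ/J_excl.
Qed.

Lemma violates_OAS_witness (R : rule) G n ag ag1 ag2 ov (K : pred form) (P : profile n) J0 phi0 :
  js_valued R -> 0 < n -> consistent G pred0 -> is_agenda ag ->
  indep_overlap_decomp G ag ag1 ag2 -> is_profile G ag P ->
  {in agl ag1, forall phi, phi \in agl ag2 -> phi \in agl ov} -> is_js G ov K ->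
  (forall J, R G ag1 n (restrict P ag1) J -> subsetF K J) ->
  (forall J, R G ag2 n (restrict P ag2) J -> subsetF K J) ->
  R G ag n P J0 -> K phi0 -> ~~ J0 phi0 -> violates_OAS R.
Proof.
move=> R_js n_gt0 G_cons ag_ok decomp P_prof overlap K_js R1_K R2_K R_J0 K_phi0 J0_phi0.
exists G, n, ag, ag1, ag2, P; split=> //; split.
  move=> J1 J2 R_J1 R_J2 phi.
  have [[J1_agl _ J1_cons] [J2_agl _ J2_cons]] := (R_js _ _ _ _ _ R_J1, R_js _ _ _ _ _ R_J2).
  case agl1_phi: (phi \in agl ag1); case agl2_phi: (phi \in agl ag2); rewrite ?andbT ?andbF.
  - have ov_phi := overlap _ agl1_phi agl2_phi.
    rewrite (js_extends_on K_js J1_cons (R1_K _ R_J1) ov_phi).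
    by rewrite (js_extends_on K_js J2_cons (R2_K _ R_J2) ov_phi).
  - by apply/esym/negbTE/negP=> /J2_agl; rewrite agl2_phi.
  - by apply/negbTE/negP=> /J1_agl; rewrite agl1_phi.
  - by [].
case/(_ J0)=> /(_ R_J0)[J1 [J2 [R_J1 _ eqJ0]]].
by move: J0_phi0; rewrite eqJ0 /= (R1_K _ R_J1 _ K_phi0).
Qed.

Lemma outputs_extend (R : pred form -> Prop) L Lk (S : seq (seq bool)) (wk : seq bool) :
  (forall J, R J -> exists2 w, w \in S & J =1 js_of L w) ->
  all (fun w => all (fun phi => js_of Lk wk phi ==> js_of L w phi) Lk) S ->
  forall J, R J -> subsetF (js_of Lk wk) J.
Proof.
move=> R_S /allP S_K J /R_S[w /S_K/allP w_K eqJ] phi K_phi.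
have /andP[Lk_phi _] := K_phi.
by rewrite eqJ; exact: (implyP (w_K _ Lk_phi)).
Qed.

(** * The counterexample *)

Definition x1 := Var 0.
Definition x2 := Var 1.
Definition y1 := Var 2.
Definition y2 := Var 3.
Definition z1 := Var 4.
Definition z2 := Var 5.

Definition ex_constraint : form :=
  And (And (Neg (And (And y1 y2) x1)) (Neg (And (And y1 y2) x2)))
      (And (Neg (And (And z1 z2) x1)) (Neg (And (And z1 z2) x2))).

Definition ex_agenda : seq form := [:: x1; x2; y1; y2; z1; z2].
Definition ex_agenda1 : seq form := [:: x1; x2; y1; y2].
Definition ex_agenda2 : seq form := [:: x1; x2; z1; z2].
Definition ex_overlap : seq form := [:: x1; x2].

Definition ex_models : seq (seq bool) := models ex_constraint 6.

(* Literal copies of the [agl] lists: profiles built on them can be evaluated without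
   recomputing [agl] at every query. *)
Definition ex_formulas : seq form :=
  [:: x1; Neg x1; x2; Neg x2; y1; Neg y1; y2; Neg y2; z1; Neg z1; z2; Neg z2].
Definition ex_formulas1 : seq form := [:: x1; Neg x1; x2; Neg x2; y1; Neg y1; y2; Neg y2].
Definition ex_formulas2 : seq form := [:: x1; Neg x1; x2; Neg x2; z1; Neg z1; z2; Neg z2].

Lemma agl_ex_agenda : agl ex_agenda = ex_formulas. Proof. by vm_compute. Qed.
Lemma agl_ex_agenda1 : agl ex_agenda1 = ex_formulas1. Proof. by vm_compute. Qed.
Lemma agl_ex_agenda2 : agl ex_agenda2 = ex_formulas2. Proof. by vm_compute. Qed.

Lemma ex_constraint_vars : vars_lt 6 ex_constraint. Proof. by []. Qed.
Lemma ex_agenda_vars : all (vars_lt 6) ex_agenda. Proof. by []. Qed.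
Lemma ex_agenda1_vars : all (vars_lt 6) ex_agenda1. Proof. by []. Qed.
Lemma ex_agenda2_vars : all (vars_lt 6) ex_agenda2. Proof. by []. Qed.

Lemma ex_is_agenda : is_agenda ex_agenda.
Proof.
by move=> phi /(nthP x1)[i lt_i6 <-]; split=> [/(_ (fun _ => false))|/(_ (fun _ => true))];
  move: i lt_i6; do 6!case=> //.
Qed.

Lemma ex_overlap_agl :
  {in agl ex_agenda1, forall phi, phi \in agl ex_agenda2 -> phi \in agl ex_overlap}.
Proof.
have /allP overlap : all (fun phi => (phi \in agl ex_agenda2) ==> (phi \in agl ex_overlap))
                         (agl ex_agenda1) by vm_compute.
by move=> phi /overlap/implyP.
Qed.

Lemma ex_agl_cover : agl ex_agenda =i agl ex_agenda1 ++ agl ex_agenda2.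
Proof.
have /perm_mem agl_perm : perm_eq (agl ex_agenda) (undup (agl ex_agenda1 ++ agl ex_agenda2)).
  by vm_compute.
by move=> phi; rewrite agl_perm mem_undup.
Qed.

(* The constraint is a conjunction of a condition on (x, y) and one on (x, z), so
   two models agreeing on x1, x2 are glued by taking x, y from the first and z from
   the second. *)
Lemma ex_decomposition : indep_overlap_decomp ex_constraint ex_agenda ex_agenda1 ex_agenda2.
Proof.
apply: (@indep_overlap_decomp_glue _ _ ex_agenda _ _ (fun w1 w2 => take 4 w1 ++ drop 4 w2)
          ex_constraint_vars ex_agenda1_vars ex_agenda2_vars _ _ ex_agl_cover).
- by apply/allP; vm_compute.
- by apply/allP; vm_compute.
- by vm_compute.
Qed.

Lemma ex_consistent : consistent ex_constraint pred0.
Proof. by exists (fun _ => false). Qed.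

Lemma ex_rejectable ag' :
  ag' \in [:: ex_agenda; ex_agenda1; ex_agenda2] ->
  all (fun phi => has (fun v => ~~ js_of (agl ag') v phi) ex_models) (agl ag').
Proof. by rewrite !inE => /or3P[] /eqP->; vm_compute. Qed.

Definition ex_profile (ws : seq (seq bool)) : nat -> pred form :=
  fun i => js_of ex_formulas (nth [::] ws i).

Lemma ex_violates_OAS (R : rule) (ws : seq (seq bool)) (wk w0 : seq bool) :
  js_valued R -> 0 < size ws -> all (mem ex_models) ws -> wk \in ex_models ->
  (forall J, R ex_constraint ex_agenda1 (size ws)
               (prof_of (size ws) (restrict_family (ex_profile ws) ex_formulas1)) J ->
     subsetF (js_of (agl ex_overlap) wk) J) ->
  (forall J, R ex_constraint ex_agenda2 (size ws)
               (prof_of (size ws) (restrict_family (ex_profile ws) ex_formulas2)) J ->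
     subsetF (js_of (agl ex_overlap) wk) J) ->
  R ex_constraint ex_agenda (size ws) (prof_of (size ws) (ex_profile ws))
    (js_of ex_formulas w0) ->
  js_of (agl ex_overlap) wk x2 -> ~~ js_of ex_formulas w0 x2 -> violates_OAS R.
Proof.
move=> R_js ws_gt0 /allP ws_models wk_model R1 R2 R_w0 wk_x2 w0_x2.
have ws_profile : is_profile ex_constraint ex_agenda (prof_of (size ws) (ex_profile ws)).
  move=> i; rewrite /prof_of /ex_profile -agl_ex_agenda.
  exact/js_of_is_js/ws_models/mem_nth.
apply: (violates_OAS_witness R_js ws_gt0 ex_consistent ex_is_agenda ex_decomposition
          ws_profile ex_overlap_agl (js_of_is_js ex_overlap wk_model) _ _ R_w0 wk_x2 w0_x2).
  by rewrite (restrict_prof_of _ _ agl_ex_agenda1).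
by rewrite (restrict_prof_of _ _ agl_ex_agenda2).
Qed.

Definition ex_votes : seq (seq bool) :=
  [:: [:: true; true; true; false; true; false];
      [:: true; true; false; true; false; true];
      [:: false; false; true; true; true; true]].

Definition ex_accept_x : seq bool := [:: true; true; false; false; false; false].
Definition ex_reject_x : seq bool := [:: false; false; true; true; true; true].

Lemma MED_violates_OAS : violates_OAS MED.
Proof.
apply: (ex_violates_OAS (ws := ex_votes) (wk := ex_accept_x) (w0 := ex_reject_x) MED_js_valued) => //.
- apply: (outputs_extend (fun J => (MED_prof_of _ _ ex_constraint_vars ex_agenda1_vars J).1)).
  by vm_compute.
- apply: (outputs_extend (fun J => (MED_prof_of _ _ ex_constraint_vars ex_agenda2_vars J).1)).
  by vm_compute.
- apply: (MED_prof_of _ _ ex_constraint_vars ex_agenda_vars _).2.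
  by exists ex_reject_x; [vm_compute | rewrite agl_ex_agenda].
Qed.

Lemma MCC_violates_OAS : violates_OAS MCC.
Proof.
apply: (ex_violates_OAS (ws := ex_votes) (wk := ex_accept_x) (w0 := ex_reject_x) MCC_js_valued) => //.
- apply: (outputs_extend (fun J => (MCC_prof_of _ _ ex_constraint_vars ex_agenda1_vars J).1)).
  by vm_compute.
- apply: (outputs_extend (fun J => (MCC_prof_of _ _ ex_constraint_vars ex_agenda2_vars J).1)).
  by vm_compute.
- apply: (MCC_prof_of _ _ ex_constraint_vars ex_agenda_vars _).2.
  by exists ex_reject_x; [vm_compute | rewrite agl_ex_agenda].
Qed.

Definition ex_nearest1 : seq (seq form) :=
  [:: [:: x1; x2; Neg y1; Neg y2]; [:: x1; x2; Neg y1; y2]; [:: Neg x1; Neg x2; y1; y2]].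
Definition ex_nearest2 : seq (seq form) :=
  [:: [:: x1; x2; Neg z1; Neg z2]; [:: x1; x2; Neg z1; z2]; [:: Neg x1; Neg x2; z1; z2]].
Definition ex_nearest : seq (seq form) :=
  [:: [:: Neg x1; Neg x2; y1; Neg y2; z1; Neg z2];
      [:: x1; x2; Neg y1; y2; Neg z1; z2];
      [:: Neg x1; Neg x2; y1; y2; z1; z2]].

Lemma FULL_H_violates_OAS : violates_OAS FULL_H.
Proof.
apply: (ex_violates_OAS (ws := ex_votes) (wk := ex_accept_x) (w0 := ex_reject_x) FULL_H_js_valued) => //.
- by apply: (FULL_H_extends ex_constraint_vars ex_agenda1_vars (qs0 := ex_nearest1));
    vm_compute.
- by apply: (FULL_H_extends ex_constraint_vars ex_agenda2_vars (qs0 := ex_nearest2));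
    vm_compute.
- have reject_js : is_js ex_constraint ex_agenda (js_of ex_formulas ex_reject_x).
    by rewrite -agl_ex_agenda; apply: (@js_of_is_js _ 6); vm_compute.
  by apply: (FULL_H_of_ball ex_constraint_vars ex_agenda_vars (qs0 := ex_nearest) _ _ reject_js);
    vm_compute.
Qed.

Definition ex_rev_votes : seq (seq bool) :=
  [:: [:: false; false; true; true; true; true];
      [:: false; true; false; false; false; false];
      [:: false; true; false; false; false; false];
      [:: false; true; false; false; false; false]].

Definition ex_accept_x2 : seq bool := [:: false; true; false; false; false; false].
Definition ex_reject_all : seq bool := nseq 6 false.

Lemma R_rev_violates_OAS : violates_OAS R_rev.
Proof.
apply: (ex_violates_OAS (ws := ex_rev_votes) (wk := ex_accept_x2) (w0 := ex_reject_all) R_rev_js_valued) => //.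
- apply: (outputs_extend (fun J => (R_rev_prof_of _ _ ex_constraint_vars ex_agenda1_vars J
                                      (ex_rejectable (ag' := ex_agenda1) isT)).1)).
  by vm_compute.
- apply: (outputs_extend (fun J => (R_rev_prof_of _ _ ex_constraint_vars ex_agenda2_vars J
                                      (ex_rejectable (ag' := ex_agenda2) isT)).1)).
  by vm_compute.
- apply: (R_rev_prof_of _ _ ex_constraint_vars ex_agenda_vars _
           (ex_rejectable (ag' := ex_agenda) isT)).2.
  by exists ex_reject_all; [vm_compute | rewrite agl_ex_agenda].
Qed.

Theorem proposition5 :
  violates_OAS MCC /\ violates_OAS MED /\ violates_OAS FULL_H /\ violates_OAS R_rev.
Proof.
split; first exact: MCC_violates_OAS.
split; first exact: MED_violates_OAS.
split; first exact: FULL_H_violates_OAS.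
exact: R_rev_violates_OAS.
Qed.
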